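(* Let $p>2$ be a prime, $P$ a finite $p$-group, and $M,N$ normal subgroups of $P$. Then (1) $\operatorname{pwh}_P([N,P])\le \operatorname{pwh}_P(N)$; (2) $\operatorname{pwh}_P(N^p)\le \operatorname{pwh}_P(N)$; (3) $\operatorname{pwh}_P(MN)\le \max\{\operatorname{pwh}_P(M),\operatorname{pwh}_P(N)\}$.
   Context: For a finite $p$-group $P$, a normal subgroup $N$ of $P$ is powerfully embedded in $P$ if $[N,P]\le N^p$ when $p$ is odd, and $[N,P]\le N^4$ when $p=2$ (here $N^{k}$ denotes the subgroup generated by all $k$-th powers of elements of $N$). An $\eta$-series of $P$ is an ascending series $1=N_0\le N_1\le N_2\le\cdots$ of normal subgroups of $P$ such that $N_{i+1}/N_i$ is powerfully embedded in $P/N_i$ for all $i$. For $N\trianglelefteq P$, the powerful height $\operatorname{pwh}_P(N)$ is the smallest $k$ such that there is an $\eta$-series with $N_k=N$. *)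

From mathcomp Require Import all_boot all_fingroup all_solvable.
Set Implicit Arguments. Unset Strict Implicit. Unset Printing Implicit Defensive.
Local Open Scope group_scope.

Definition pow_sub (gT : finGroupType) (N : {set gT}) (k : nat) : {set gT} :=
  <<[set x ^+ k | x in N]>>.

Definition pw_embedded (gT : finGroupType) (p : nat) (N P : {set gT}) : Prop :=
  N <| P /\ [~: N, P] \subset pow_sub N (if p == 2 then 4 else p).

Definition eta_series (gT : finGroupType) (p : nat) (P : {group gT})
  (s : nat -> {group gT}) : Prop :=
  s 0 = 1%G /\
  forall i, [/\ s i \subset s i.+1, s i <| P, s i.+1 <| P &
             pw_embedded p (s i.+1 / s i) (P / s i)].

(* "pwh_P(N) <= k" witnessed: some eta-series has N_k = N *)
Definition pwh_at (gT : finGroupType) (p : nat) (P N : {group gT}) (k : nat) : Prop :=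
  exists s : nat -> {group gT}, eta_series p P s /\ s k = N.

(* pwh_P(X) <= pwh_P(Y) for all heights realised by Y *)
Definition pwh_le (gT : finGroupType) (p : nat) (P X : {group gT}) (k : nat) : Prop :=
  exists2 j, j <= k & pwh_at p P X j.

From mathcomp Require Import all_boot all_fingroup all_solvable.
Set Implicit Arguments. Unset Strict Implicit. Unset Printing Implicit Defensive.
Local Open Scope group_scope.

(* Read in P, "A / H is powerfully embedded in P / H" says [A, P] \subset A^p H,
   so an eta-series is a chain of normal subgroups with
   [N_(i+1), P] \subset N_(i+1)^p N_i. Such chains are closed under termwise
   joins, which gives (3). For (1) and (2) the key fact is that, for p odd and P
   nilpotent, [A, P] \subset A^p B forces [A^p, P] into every normal subgroup
   containing [B, P] and the p-th powers of the elements of [A, P]. Applied to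
   the chain ([N_i, P]) this gives (1), and applied to N^p :&: N_i^p N_(i-1) it
   gives (2). *)

Section PowerSubgroup.
Variables (gT : finGroupType) (n : nat).
Implicit Types A B G H : {group gT}.

Lemma mem_pow_sub A x : x \in A -> x ^+ n \in pow_sub A n.
Proof. by move=> Ax; apply/mem_gen/imsetP; exists x. Qed.

Lemma pow_sub_sub A : pow_sub A n \subset A.
Proof. by rewrite gen_subG; apply/subsetP=> _ /imsetP[x Ax ->]; rewrite groupX. Qed.

Lemma pow_subS A B : A \subset B -> pow_sub A n \subset pow_sub B n.
Proof. by move=> sAB; apply/genS/imsetS. Qed.

Lemma pow_sub_norms G A : G \subset 'N(A) -> G \subset 'N(pow_sub A n).
Proof.
move=> nAG; apply/norms_gen/subsetP=> g Gg; rewrite inE.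
apply/subsetP=> _ /imsetP[_ /imsetP[x Ax ->] ->].
by rewrite conjXg; apply/imsetP; exists (x ^ g); rewrite // memJ_norm ?(subsetP nAG).
Qed.

Lemma pow_sub_normal G A : A <| G -> pow_sub A n <| G.
Proof.
case/andP=> sAG nAG.
by rewrite /normal pow_sub_norms // andbT (subset_trans (pow_sub_sub A)).
Qed.

Lemma morphim_pow_sub (rT : finGroupType) (D : {group gT})
    (f : {morphism D >-> rT}) A :
  A \subset D -> f @* pow_sub A n = pow_sub (f @* A) n.
Proof.
move=> sAD; have sApD : [set x ^+ n | x in A] \subset D.
  by apply/subsetP=> _ /imsetP[x Ax ->]; rewrite groupX ?(subsetP sAD).
rewrite /pow_sub morphim_gen // !morphimEsub // -!imset_comp.
by congr <<_>>; apply: eq_in_imset=> x Ax /=; rewrite morphX ?(subsetP sAD).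
Qed.

Lemma quotient_pow_sub A H : A \subset 'N(H) -> pow_sub A n / H = pow_sub (A / H) n.
Proof. exact: morphim_pow_sub. Qed.

End PowerSubgroup.

Lemma dvdn_bin2 m : odd m -> m %| 'C(m, 2).
Proof.
move=> odd_m; rewrite bin2 -{3}(odd_double_half m) odd_m add1n /=.
by rewrite -doubleMr half_double dvdn_mulr.
Qed.

Section Commutators.
Variable gT : finGroupType.
Implicit Types A B G H K P X : {group gT}.

Lemma joingSS (A B C D : {set gT}) :
  A \subset B -> C \subset D -> A <*> C \subset B <*> D.
Proof. by move=> sAB sCD; apply/genS/setUSS. Qed.

Lemma normal_commg H G : H <| G -> [~: H, G] <| G.
Proof. by move=> nHG; rewrite /normal commg_normr andbT comm_subG ?normal_sub. Qed.

Lemma commYG A B P : A <| P -> B <| P -> [~: A <*> B, P] = [~: A, P] * [~: B, P].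
Proof.
move=> nAP nBP; rewrite norm_joinEr ?commMG //.
  exact: subset_trans (normal_sub nBP) (normal_norm (normal_commg nAP)).
exact: subset_trans (normal_sub nBP) (normal_norm nAP).
Qed.

(* In the nilpotent group P / K, a normal subgroup contained in its commutator
   with P / K is trivial. *)
Lemma sub_joing_commg_nil P X K :
  nilpotent P -> X <| P -> K <| P -> X \subset K <*> [~: X, P] -> X \subset K.
Proof.
move=> nilP nXP nKP sX; have nKP' := normal_norm nKP.
have nKX := subset_trans (normal_sub nXP) nKP'.
rewrite -quotient_sub1 //.
have sXR : X / K \subset [~: X / K, P / K].
  rewrite -quotientR // -[[~: X, P] / K]quotientYidl; first exact: quotientS.
  by rewrite comm_subG // (subset_trans (normal_sub nXP)).
have [-> // | ntXK] := eqVneq (X / K) 1.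
have := nil_comm_properl (quotient_nil K nilP) (quotientS K (normal_sub nXP)) ntXK.
move/(_ (P / K)); rewrite subsetI subxx quotient_norms ?normal_norm //.
by move/(_ isT); rewrite properE sXR andbF.
Qed.

Lemma expMg_mod_mem K a b m :
  a \in 'N(K) -> b \in 'N(K) -> [~ a, b] \in K -> a ^+ m \in K -> b ^+ m \in K ->
  (a * b) ^+ m \in K.
Proof.
move=> Na Nb abK amK bmK; apply: coset_idr; first by rewrite groupX ?groupM.
rewrite morphX ?groupM //= morphM //= expgMn; last first.
  by apply/commgP; rewrite -morphR //= coset_id.
by rewrite -!morphX //= !coset_id // mulg1.
Qed.

End Commutators.

Section OddExponent.
Variable p : nat.
Hypothesis odd_p : odd p.

Lemma commXg_eq1 (gT : finGroupType) (x g : gT) :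
  commute x [~ [~ x, g], x] -> commute [~ x, g] [~ [~ x, g], x] ->
  [~ x, g] ^+ p = 1 -> [~ x ^+ p, g] = 1.
Proof.
set c := [~ x, g] => cxz ccz cp1.
have zp1 : [~ c, x] ^+ 'C(p, 2) = 1.
  have /dvdnP[m ->] := dvdn_bin2 odd_p.
  by rewrite mulnC expgM -commXg // cp1 comm1g expg1n.
have xcp : (x * c) ^+ p = x ^+ p by rewrite expMg_Rmul // cp1 zp1 !mulg1.
by rewrite /commg conjXg conjg_mulR xcp mulVg.
Qed.

Lemma comm_expg_mod (gT : finGroupType) (K : {group gT}) (x g : gT) :
  x \in 'N(K) -> g \in 'N(K) ->
  [~ [~ [~ x, g], x], x] \in K -> [~ [~ [~ x, g], x], [~ x, g]] \in K ->
  [~ x, g] ^+ p \in K -> [~ x ^+ p, g] \in K.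
Proof.
move=> Nx Ng zxK zcK cpK; apply: coset_idr; first by rewrite groupR ?groupX.
rewrite morphR ?groupX //= morphX //=; apply: commXg_eq1.
- by apply/commute_sym/commgP; rewrite -!morphR ?groupR //= coset_id.
- by apply/commute_sym/commgP; rewrite -!morphR ?groupR //= coset_id.
by rewrite -morphR //= -morphX ?groupR //= coset_id.
Qed.

(* Modulo L := K <*> [[A^p, P], P], for x in A and g in P the commutator
   [x, g] has p-th power 1 and [[x, g], x] is central (its commutators lie in
   [[[A, P], P], P] \subset L), so [x^p, g] = 1 by commXg_eq1; nilpotency of P
   then removes [[A^p, P], P] from L. *)
Lemma comm_pow_subG (gT : finGroupType) (P A B K : {group gT}) :
  nilpotent P -> A <| P -> B <| P -> K <| P ->
  [~: A, P] \subset pow_sub A p <*> B -> [~: B, P] \subset K ->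
  {in [~: A, P], forall c, c ^+ p \in K} ->
  [~: pow_sub A p, P] \subset K.
Proof.
move=> nilP nAP nBP nKP sAP_YB sBP_K cpK.
set Y := pow_sub A p; have nYP : Y <| P := pow_sub_normal p nAP.
have nYP_P := normal_commg nYP.
pose L := (K <*> [~: [~: Y, P], P])%G.
have nLP : L <| P by rewrite normalY ?normal_commg.
apply: sub_joing_commg_nil nilP nYP_P nKP _; change ([~: Y, P] \subset L).
have sKL : K \subset L := joing_subl _ _.
have sA3L : [~: [~: [~: A, P], P], P] \subset L.
  have sA2 : [~: [~: A, P], P] \subset [~: Y, P] <*> L.
    apply: subset_trans (commSg P sAP_YB) _; rewrite commYG //.
    by rewrite mul_subG ?joing_subl // (subset_trans sBP_K) // (subset_trans sKL) ?joing_subr.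
  apply: subset_trans (commSg P sA2) _; rewrite commYG ?normal_commg //.
  by rewrite mul_subG ?joing_subr // commg_subl normal_norm.
have nLP' := normal_norm nLP.
have nLgen : [set x ^+ p | x in A] \subset 'N(L).
  exact: subset_trans (subset_gen _) (subset_trans (normal_sub nYP) nLP').
rewrite -quotient_cents2 ?(subset_trans (normal_sub nYP)) //.
rewrite /Y /pow_sub quotient_gen // gen_subG quotient_cents2 // gen_subG.
apply/subsetP=> _ /imset2P[_ g /imsetP[x Ax ->] Pg ->].
have Px : x \in P := subsetP (normal_sub nAP) x Ax.
have cAP : [~ x, g] \in [~: A, P] by rewrite mem_commg.
apply: comm_expg_mod; rewrite ?(subsetP nLP') //.
- by apply: (subsetP sA3L); rewrite !mem_commg.
- by apply: (subsetP sA3L); rewrite !mem_commg ?groupR.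
by rewrite (subsetP sKL) ?cpK.
Qed.

Lemma expg_commg_mem (gT : finGroupType) (P A B K : {group gT}) :
  A <| P -> B <| P -> K <| P ->
  [~: A, P] \subset pow_sub A p <*> B -> [~: B, P] \subset K ->
  pow_sub (pow_sub A p) p \subset K -> pow_sub B p \subset K ->
  {in [~: A, P], forall c, c ^+ p \in K}.
Proof.
move=> nAP nBP nKP sAP_YB sBP_K sYpK sBpK c cAP.
have sY_P : pow_sub A p \subset P := subset_trans (pow_sub_sub p A) (normal_sub nAP).
have sAP_YB' : [~: A, P] \subset pow_sub A p * B.
  by rewrite -norm_joinEl // (subset_trans sY_P) ?normal_norm.
have /mulsgP[a b Ya Bb ->] := subsetP sAP_YB' c cAP.
have Pa : a \in P := subsetP sY_P a Ya.
have Pb : b \in P := subsetP (normal_sub nBP) b Bb.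
have nKP' := subsetP (normal_norm nKP).
apply: expMg_mod_mem; rewrite ?nKP' //.
- by rewrite -invg_comm groupV (subsetP sBP_K) ?mem_commg.
- by rewrite (subsetP sYpK) ?mem_pow_sub.
by rewrite (subsetP sBpK) ?mem_pow_sub.
Qed.

End OddExponent.

Section EtaSeries.
Variables (gT : finGroupType) (p : nat) (P : {group gT}).
Implicit Types (A B H N : {group gT}) (s t : nat -> {group gT}).

(* The condition that A / H is powerfully embedded in P / H, read in P. *)
Definition pw_embedded_mod (H A : {set gT}) :=
  [~: A, P] \subset pow_sub A p <*> H.

Definition eta_chain s :=
  s 0 = 1%G /\ forall i,
    [/\ s i \subset s i.+1, s i <| P, s i.+1 <| P & pw_embedded_mod (s i) (s i.+1)].

Lemma pw_embedded_quotientE H A :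
  p != 2 -> H <| P -> A <| P ->
  pw_embedded p (A / H) (P / H) <-> pw_embedded_mod H A.
Proof.
move=> p_neq2 nHP nAP; have nHP' := normal_norm nHP.
have nHA := subset_trans (normal_sub nAP) nHP'.
have nHY := subset_trans (pow_sub_sub p A) nHA.
rewrite /pw_embedded (negbTE p_neq2) quotient_normal //=.
suff -> : ([~: A / H, P / H] \subset pow_sub (A / H) p) = pw_embedded_mod H A.
  by split=> [[]|].
have nHR : [~: A, P] \subset 'N(H) by rewrite comm_subG // normal_sub.
rewrite -quotientR // -quotient_pow_sub // quotientSK //.
by rewrite /pw_embedded_mod norm_joinEl // (normC nHY).
Qed.

Lemma eta_seriesE s : p != 2 -> eta_series p P s <-> eta_chain s.
Proof.
move=> p_neq2; split=> -[s0 step]; split=> // i; have [sS nP0 nP1 pw] := step i.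
  by split=> //; apply/(pw_embedded_quotientE p_neq2 nP0 nP1).
by split=> //; apply/(pw_embedded_quotientE p_neq2 nP0 nP1).
Qed.

Lemma eta_chain_mono s i j : eta_chain s -> i <= j -> s i \subset s j.
Proof.
move=> [_ step]; elim: j => [|j IHj]; first by rewrite leqn0 => /eqP ->.
rewrite leq_eqVlt => /predU1P[-> // | /IHj sij].
by apply: subset_trans sij _; case: (step j).
Qed.

Lemma pwh_le_chain s k N : p != 2 -> eta_chain s -> s k = N -> pwh_le p P N k.
Proof. by move=> p_neq2 chain skN; exists k => //; exists s; split=> //; apply/eta_seriesE. Qed.

(* Stopping an eta-series at N_k = N makes it constant from k on. *)
Lemma pwh_at_stationary N k :
  p != 2 -> pwh_at p P N k -> exists2 s, eta_chain s & forall i, k <= i -> s i = N.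
Proof.
move=> p_neq2 [s [/(eta_seriesE _ p_neq2) [s0 step] skN]].
exists (fun i => s (minn i k)); last by move=> i le_ki; rewrite /= (minn_idPr le_ki).
split=> [|i /=]; first by rewrite min0n.
have [lt_ik | le_ki] := ltnP i k.
  by rewrite (minn_idPl lt_ik); apply: step.
rewrite (minn_idPr (leqW le_ki)).
have [_ nkP _ _] := step k; split=> //.
by rewrite /pw_embedded_mod (subset_trans _ (joing_subr _ _)) // commg_subl normal_norm.
Qed.

Lemma pw_embedded_modY A0 A1 B0 B1 :
  A1 <| P -> B1 <| P -> pw_embedded_mod A0 A1 -> pw_embedded_mod B0 B1 ->
  pw_embedded_mod (A0 <*> B0) (A1 <*> B1).
Proof.
move=> nA1P nB1P pwA pwB; rewrite /pw_embedded_mod commYG // mul_subG //.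
  by apply: subset_trans pwA _; rewrite joingSS ?pow_subS ?joing_subl.
by apply: subset_trans pwB _; rewrite joingSS ?pow_subS ?joing_subr.
Qed.

Lemma eta_chain_join s t :
  eta_chain s -> eta_chain t -> eta_chain (fun i => (s i <*> t i)%G).
Proof.
move=> [s0 sS] [t0 tS]; split=> [|i /=].
  by apply: group_inj; rewrite /= s0 t0 joing1G.
have [sA nA0 nA1 pwA] := sS i; have [sB nB0 nB1 pwB] := tS i.
by rewrite joingSS ?normalY ?pw_embedded_modY.
Qed.

Hypotheses (odd_p : odd p) (nilP : nilpotent P).

Lemma eta_chain_commg s : eta_chain s -> eta_chain (fun i => [~: s i, P]%G).
Proof.
move=> [s0 step]; split=> [|i /=].
  by apply: group_inj; rewrite /= s0 comm1G.
have [sS nP0 nP1 pw] := step i.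
rewrite commSg ?normal_commg //; split=> //.
set K := (pow_sub [~: s i.+1, P] p <*> [~: s i, P])%G.
have nKP : K <| P by rewrite normalY ?pow_sub_normal ?normal_commg.
apply: subset_trans (commSg P pw) _; rewrite commYG ?pow_sub_normal //.
rewrite mul_subG ?joing_subr //; apply: (comm_pow_subG odd_p nilP nP1 nP0 nKP pw).
  by rewrite /K /= joing_subr.
by move=> c cAP; rewrite /K /= (subsetP (joing_subl _ _)) ?mem_pow_sub.
Qed.

(* N^p :&: N_i^p N_(i-1) for an eta-series (N_i) of N; at i = 0 the
   predecessor index is 0.-1 = 0. *)
Definition pow_chain N s i := (pow_sub N p :&: (pow_sub (s i) p <*> s i.-1))%G.

Lemma eta_chain_pow N s :
  N <| P -> (forall i, s i \subset N) -> eta_chain s -> eta_chain (pow_chain N s).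
Proof.
move=> nNP sN chain; have [s0 step] := chain.
pose S i := (pow_sub (s i) p <*> s i.-1)%G.
have nsP i : s i <| P by case: (step i).
have nSP i : S i <| P by rewrite normalY ?pow_sub_normal.
have commS i : [~: s i, P] \subset S i.
  by case: i => [|i]; [rewrite s0 comm1G sub1G | case: (step i)].
have nNpP : pow_sub N p <| P := pow_sub_normal p nNP.
split=> [|i].
  apply/group_inj/trivgP; rewrite /= (subset_trans (subsetIr _ _)) //= s0.
  by apply/joing_subP; rewrite pow_sub_sub.
have [sAB nBP nAP pwA] := step i.
rewrite /pow_chain setIS ?joingSS ?pow_subS ?(eta_chain_mono chain (leq_pred i)) //.
rewrite !normalI ?normalY ?pow_sub_normal //; split=> //.
set A := s i.+1; set B := s i; rewrite -/(S i) -/(S i.+1).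
set T := (pow_sub N p :&: S i.+1)%G.
have nYP : pow_sub A p <| P := pow_sub_normal p nAP.
set K := (pow_sub (pow_sub A p) p <*> S i)%G.
have nKP : K <| P by rewrite normalY ?pow_sub_normal.
have sBP_K : [~: B, P] \subset K := subset_trans (commS i) (joing_subr _ _).
have sSP_K : [~: S i.+1, P] \subset K.
  rewrite commYG // mul_subG //; apply: (comm_pow_subG odd_p nilP nAP nBP nKP pwA sBP_K).
  apply: (expg_commg_mem nAP nBP nKP pwA sBP_K (joing_subl _ _)).
  exact: subset_trans (joing_subl _ _) (joing_subr _ _).
have sYT : pow_sub A p \subset T by rewrite subsetI pow_subS ?sN ?joing_subl.
rewrite /pw_embedded_mod.
apply: subset_trans (_ : _ \subset pow_sub T p * (S i :&: pow_sub N p)) _; last first.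
  by rewrite mul_subG ?joing_subl // setIC joing_subr.
rewrite group_modl ?(subset_trans (pow_sub_sub p T)) ?subsetIl // subsetI.
apply/andP; split; last first.
  by apply: subset_trans (commSg P (subsetIl _ _)) _; rewrite commg_subl normal_norm.
apply: subset_trans (commSg P (subsetIr _ _)) _; apply: subset_trans sSP_K _.
have nTpP : pow_sub T p <| P by rewrite pow_sub_normal ?normalI.
by rewrite -norm_joinEr ?joingSS ?pow_subS // (subset_trans (normal_sub (nSP i))) ?normal_norm.
Qed.

End EtaSeries.

Theorem lemma2p1 (gT : finGroupType) (p : nat) (P M N : {group gT}) :
  prime p -> 2 < p -> p.-group P -> M <| P -> N <| P ->
  [/\ (forall k, pwh_at p P N k -> pwh_le p P [~: N, P]%G k),
      (forall k, pwh_at p P N k -> pwh_le p P (pow_sub N p)%G k) &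
      (forall kM kN, pwh_at p P M kM -> pwh_at p P N kN ->
         pwh_le p P (M <*> N)%G (maxn kM kN))].
Proof.
move=> pr_p p_gt2 pP nMP nNP; have p_neq2 : p != 2 by rewrite gtn_eqF.
have odd_p : odd p by case: (even_prime pr_p) p_neq2 => [->|].
have nilP := pgroup_nil pP.
split.
- move=> k /(pwh_at_stationary p_neq2)[s chain sN].
  by apply: pwh_le_chain p_neq2 (eta_chain_commg odd_p nilP chain) _; rewrite sN.
- move=> k /(pwh_at_stationary p_neq2)[s chain sN].
  have sub_N i : s i \subset N.
    by rewrite -(sN (maxn i k)) ?leq_maxr ?(eta_chain_mono chain) ?leq_maxl.
  apply: pwh_le_chain p_neq2 (eta_chain_pow odd_p nilP nNP sub_N chain) _.
  by apply/group_inj/setIidPl; rewrite /= sN ?joing_subl.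
move=> kM kN /(pwh_at_stationary p_neq2)[s chainM sM].
move=> /(pwh_at_stationary p_neq2)[t chainN tN].
apply: pwh_le_chain p_neq2 (eta_chain_join chainM chainN) _.
by rewrite sM ?tN ?leq_maxl ?leq_maxr.
Qed.
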